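(* Let $\omega>0$ and let $\tau:[0,\omega]\to\mathbb{R}$ be a positive function, differentiable on $(0,\omega)$, satisfying $\alpha(x)+\chi(\tau(x))=0$ for all $x\in[0,\omega]$, where $\alpha$ and $\chi$ are convex functions with $\alpha$ increasing and $\chi$ decreasing. Assume there exists $x^*\in(0,\omega)$ with $\tau'(x^* )=\tau(x^* )/x^*$. Then $\frac{x^*}{\tau(x^* )}\ge\frac{y}{\tau(y)}$ for all $y\in[0,\omega]$. *)

From Stdlib Require Import Reals.
Open Scope R_scope.

Definition convex_on (D : R -> Prop) (f : R -> R) : Prop :=
  forall x y t, D x -> D y -> 0 <= t <= 1 ->
    f (t * x + (1 - t) * y) <= t * f x + (1 - t) * f y.

Definition strictly_increasing_on (D : R -> Prop) (f : R -> R) : Prop :=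
  forall x y, D x -> D y -> x < y -> f x < f y.

Definition strictly_decreasing_on (D : R -> Prop) (f : R -> R) : Prop :=
  forall x y, D x -> D y -> x < y -> f y < f x.

(** The relation [alpha x + chi (tau x) = 0], with [alpha] convex and [chi]
    convex and decreasing, forces [tau] to be convex.  A convex function lies
    above its tangents, and [tau' xs = tau xs / xs] says that the tangent at
    [xs] is the line [y |-> y * tau xs / xs] through the origin.  Hence
    [tau y >= y * tau xs / xs], i.e. [y / tau y <= xs / tau xs]. *)

From Stdlib Require Import Reals Lra.
Open Scope R_scope.

Lemma convex_on_level_comp (D : R -> Prop) (alpha chi tau : R -> R) :
  (forall x z t, D x -> D z -> 0 <= t <= 1 -> D (t * x + (1 - t) * z)) ->
  (forall x, D x -> 0 < tau x) ->
  convex_on D alpha ->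
  convex_on (fun s => 0 < s) chi ->
  strictly_decreasing_on (fun s => 0 < s) chi ->
  (forall x, D x -> alpha x + chi (tau x) = 0) ->
  convex_on D tau.
Proof.
intros HD Hpos Ha Hc Hcd Heq x z t Hx Hz Ht.
set (w := t * x + (1 - t) * z).
assert (Hw : D w) by exact (HD x z t Hx Hz Ht).
pose proof (Hpos x Hx) as Htx; pose proof (Hpos z Hz) as Htz.
assert (Hmid : 0 < t * tau x + (1 - t) * tau z) by nra.
assert (Hchi : chi (t * tau x + (1 - t) * tau z) <= chi (tau w)).
{ pose proof (Hc (tau x) (tau z) t Htx Htz Ht) as Hchi.
  pose proof (Ha x z t Hx Hz Ht) as Halpha; fold w in Halpha.
  replace (chi (tau x)) with (- alpha x) in Hchi by (pose proof (Heq x Hx); lra).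
  replace (chi (tau z)) with (- alpha z) in Hchi by (pose proof (Heq z Hz); lra).
  pose proof (Heq w Hw); lra. }
destruct (Rle_lt_dec (tau w) (t * tau x + (1 - t) * tau z)) as [Hle | Hlt];
  [exact Hle |].
pose proof (Hcd _ _ Hmid (Hpos w Hw) Hlt); lra.
Qed.

Lemma derivable_pt_lim_affine (x a : R) :
  derivable_pt_lim (fun t => x + t * a) 0 a.
Proof.
intros eps Heps; exists (mkposreal eps Heps); intros h Hh _.
replace ((x + (0 + h) * a - (x + 0 * a)) / h - a) with 0 by (field; exact Hh).
rewrite Rabs_R0; exact Heps.
Qed.

Lemma derivable_pt_lim_le_of_right (g : R -> R) (l c : R) :
  derivable_pt_lim g 0 l ->
  (forall t, 0 < t <= 1 -> g t - g 0 <= t * c) ->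
  l <= c.
Proof.
intros Hd Hq; apply Rnot_lt_le; intro Hcl.
destruct (Hd (l - c) ltac:(lra)) as [delta Hdelta].
pose proof (cond_pos delta) as Hdp.
set (t := Rmin 1 (delta / 2)).
assert (Ht : 0 < t <= 1).
{ split; [apply Rmin_glb_lt; lra | apply Rmin_l]. }
assert (Htd : Rabs t < delta).
{ rewrite Rabs_pos_eq by lra; pose proof (Rmin_r 1 (delta / 2)) as Hr; fold t in Hr; lra. }
pose proof (Hdelta t ltac:(lra) Htd) as Hquot.
rewrite Rplus_0_l in Hquot.
destruct (Rabs_def2 _ _ Hquot) as [_ Hlow].
assert (Hlow' : c * t < g t - g 0).
{ replace (g t - g 0) with ((g t - g 0) / t * t) by (field; lra).
  apply Rmult_lt_compat_r; lra. }
pose proof (Hq t Ht); lra.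
Qed.

Lemma convex_on_tangent_le (D : R -> Prop) (f : R -> R) (x y d : R) :
  convex_on D f -> D x -> D y ->
  derivable_pt_lim f x d ->
  f x + d * (y - x) <= f y.
Proof.
intros Hf Hx Hy Hd.
set (g := fun t => f (x + t * (y - x))).
assert (Hg : derivable_pt_lim g 0 (d * (y - x))).
{ apply (derivable_pt_lim_comp (fun t => x + t * (y - x)) f).
  - apply derivable_pt_lim_affine.
  - replace (x + 0 * (y - x)) with x by ring; exact Hd. }
enough (d * (y - x) <= f y - f x) by lra.
apply (derivable_pt_lim_le_of_right g); [exact Hg |].
intros t Ht; unfold g.
replace (x + t * (y - x)) with (t * y + (1 - t) * x) by ring.
replace (x + 0 * (y - x)) with x by ring.
pose proof (Hf y x t Hy Hx ltac:(lra)); lra.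
Qed.

Theorem lemma21 (omega : R) (tau alpha chi : R -> R) (xs : R) :
  0 < omega ->
  (forall x, 0 <= x <= omega -> 0 < tau x) ->
  (forall x, 0 < x < omega -> derivable_pt tau x) ->
  convex_on (fun x => 0 <= x <= omega) alpha ->
  strictly_increasing_on (fun x => 0 <= x <= omega) alpha ->
  convex_on (fun s => 0 < s) chi ->
  strictly_decreasing_on (fun s => 0 < s) chi ->
  (forall x, 0 <= x <= omega -> alpha x + chi (tau x) = 0) ->
  0 < xs < omega ->
  derivable_pt_lim tau xs (tau xs / xs) ->
  forall y, 0 <= y <= omega -> xs / tau xs >= y / tau y.
Proof.
intros _ Hpos _ Ha _ Hc Hcd Heq Hxs Hd y Hy.
assert (Hconv : convex_on (fun x => 0 <= x <= omega) tau).
{ apply (convex_on_level_comp _ alpha chi); auto.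
  intros x z t Hx Hz Ht; nra. }
assert (Hxs' : 0 <= xs <= omega) by lra.
pose proof (convex_on_tangent_le _ _ _ y _ Hconv Hxs' Hy Hd) as Htan.
pose proof (Hpos y Hy) as Hty; pose proof (Hpos xs Hxs') as Htx.
assert (Hline : tau xs + tau xs / xs * (y - xs) = y * tau xs / xs) by (field; lra).
assert (Hcross : y * tau xs <= xs * tau y).
{ rewrite Hline in Htan; apply Rmult_le_compat_l with (r := xs) in Htan; [|lra].
  replace (xs * (y * tau xs / xs)) with (y * tau xs) in Htan by (field; lra); lra. }
apply Rle_ge.
apply (Rmult_le_reg_r (tau xs * tau y)); [nra |].
replace (y / tau y * (tau xs * tau y)) with (y * tau xs) by (field; lra).
replace (xs / tau xs * (tau xs * tau y)) with (xs * tau y) by (field; lra).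
exact Hcross.
Qed.
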